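(* (i) For every point $\langle y\rangle\in\mathcal Y$, the point $\langle F(y)\rangle$ of $\mathrm{PG}(W)$ belongs to $\mathcal E\setminus\mathcal C$. (ii) The map $\mathcal Y\to\mathcal E\setminus\mathcal C$, $\langle y\rangle\mapsto\langle F(y)\rangle$ (the projection of $\mathcal Y$ from the line $\mathrm{PG}(V)$), is a bijection.
   Context: $q$ is a prime power. Regard $\mathbb F_{q^6}$ as a $6$-dimensional $\mathbb F_q$-vector space and let $\Pi=\mathrm{PG}(\mathbb F_{q^6})\cong\mathrm{PG}(5,q)$, whose points are $\langle x\rangle=\mathbb F_q^*x$, $x\ne0$. Let $\mathcal Y=\{\langle b-1\rangle : b\in\mathbb F_{q^6},\ b^{q^2-q+1}=1,\ b\ne 1\}$. Let $F(X)=X^{q^2}-X^q+X$, an $\mathbb F_q$-linear map of $\mathbb F_{q^6}$; let $V=\ker F$ (a $2$-dimensional $\mathbb F_q$-subspace) and $W=F(\mathbb F_{q^6})=\{z : z+z^q=z^{q^3}+z^{q^4}\}$, a $4$-dimensional $\mathbb F_q$-subspace; $\mathrm{PG}(W)\cong\mathrm{PG}(3,q)$ is identified with the quotient of $\Pi$ by $\mathrm{PG}(V)$ via $\langle x\rangle\mapsto\langle F(x)\rangle$ for $x\notin V$. Let $\Phi(z)=z^{q^2}z+z^{q^2}z^{q}+z^{q}z^{q^3}$; for $z\in W$ one has $\Phi(z)\in\mathbb F_q$, and $\mathcal E=\{\langle z\rangle\in\mathrm{PG}(W):\Phi(z)=0\}$ is a quadric of $\mathrm{PG}(W)$. Note $\mathbb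 F_{q^3}\subseteq W$; let $\mathcal C=\{\langle z\rangle\in\mathcal E: z\in\mathbb F_{q^3}\}$, the section of $\mathcal E$ by the plane $\mathrm{PG}(\mathbb F_{q^3})$ (a non-degenerate conic). *)

From HB Require Import structures.
From mathcomp Require Import all_boot all_order all_algebra all_field.
Set Implicit Arguments. Unset Strict Implicit. Unset Printing Implicit Defensive.
Import GRing.Theory.
Local Open Scope ring_scope.

(* L plays the role of F_{q^6}; F_q = {c : c^q = c}. *)
Section Defs.
Variables (L : finFieldType) (q : nat).

Definition inFqstar (c : L) : bool := (c ^+ q == c) && (c != 0).

(* projective point <x> = F_q^* x, as a subset of L *)
Definition pt (x : L) : {set L} := [set c * x | c in [pred c | inFqstar c]].

Definition Fmap (x : L) : L := x ^+ (q ^ 2) - x ^+ q + x.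

Definition Wsp : {set L} := [set Fmap x | x : L].

Definition Phi (z : L) : L :=
  z ^+ (q ^ 2) * z + z ^+ (q ^ 2) * z ^+ q + z ^+ q * z ^+ (q ^ 3).

Definition Yset : {set {set L}} :=
  [set pt (b - 1) | b in [pred b : L | (b ^+ (q ^ 2 - q + 1) == 1) && (b != 1)]].

Definition Eset : {set {set L}} :=
  [set pt z | z in [pred z : L | [&& z \in Wsp, z != 0 & Phi z == 0]]].

Definition Cset : {set {set L}} :=
  [set P in Eset | [exists z : L, [&& z ^+ (q ^ 3) == z, z != 0 & P == pt z]]].

Definition projV (P : {set L}) : {set L} :=
  if [pick y in P] is Some y then pt (Fmap y) else set0.

End Defs.

From HB Require Import structures.
From mathcomp Require Import all_boot all_order all_algebra all_field.
From mathcomp Require Import ring zify.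
Import GRing.Theory.
Local Open Scope ring_scope.

(* Let s be the Frobenius x |-> x^q, of order 6 on L.  The condition on b reads
   s^2(b) b = s(b); eliminating s^i(b) for i >= 2 with it, z = F(b - 1)
   satisfies Phi(z) = 0 and s^3(z) s(b) = z, so z is not in F_{q^3} because
   s(b) <> 1.  The same relation recovers s(b), hence b, from <z>, since all
   F_q-multiples of z have the same ratio z / s^3(z): this is injectivity.
   Conversely, for <z> in E \ C take b with s(b) = z / s^3(z); the equations
   z + s(z) = s^3(z) + s^4(z) of W and Phi(z) = 0 show that b satisfies the
   norm condition and that F(b - 1) / z is fixed by s, i.e. lies in F_q^*. *)

(* In both identities z_i stands for s^i(z): the hypotheses on z4 and z5 are
   the equations of W, and the third one is Phi(z) = 0.  The second one says
   that F(b - 1) / z is fixed by s when s(b) = z / s^3(z). *)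
Lemma quadric_conj_prod {R : comPzRingType} {z0 z1 z2 z3 z4 z5 : R} :
  z4 = z0 + z1 - z3 -> z5 = z2 - z0 + z3 ->
  z2 * z0 + z2 * z1 + z1 * z3 = 0 -> z1 * z3 * z5 = z0 * z2 * z4.
Proof.
move=> -> -> hPhi; apply/eqP; rewrite -subr_eq0.
have -> : z1 * z3 * (z2 - z0 + z3) - z0 * z2 * (z0 + z1 - z3) =
  (z3 - z0) * (z2 * z0 + z2 * z1 + z1 * z3) by ring.
by rewrite hPhi mulr0.
Qed.

Lemma quadric_conj_ratio {R : fieldType} {z0 z1 z2 z3 z4 z5 : R} :
  z4 = z0 + z1 - z3 -> z5 = z2 - z0 + z3 ->
  z2 * z0 + z2 * z1 + z1 * z3 = 0 ->
  z2 != 0 -> z3 != 0 -> z4 != 0 -> z5 != 0 ->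
  (z2 / z5 - 1 - (z1 / z4 - 1) + (z0 / z3 - 1)) * z0 =
  (z1 / z4 - 1 - (z0 / z3 - 1) + (z5 / z2 - 1)) * z1.
Proof.
move=> e4 e5 hPhi n2 n3 n4 n5; apply/eqP; rewrite -subr_eq0.
have -> : (z2 / z5 - 1 - (z1 / z4 - 1) + (z0 / z3 - 1)) * z0
    - (z1 / z4 - 1 - (z0 / z3 - 1) + (z5 / z2 - 1)) * z1
  = ((z2*z2*z3*z4 - z1*z2*z3*z5 + z0*z2*z4*z5 - z2*z3*z4*z5) * z0
    - (z1*z2*z3*z5 - z0*z2*z4*z5 + z5*z5*z3*z4 - z2*z3*z4*z5) * z1) / (z2*z3*z4*z5).
  by field; rewrite n2 n3 n4 n5.
rewrite e4 e5.
have -> : ((z2*z2*z3*(z0 + z1 - z3) - z1*z2*z3*(z2 - z0 + z3)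
      + z0*z2*(z0 + z1 - z3)*(z2 - z0 + z3)
      - z2*z3*(z0 + z1 - z3)*(z2 - z0 + z3)) * z0
    - (z1*z2*z3*(z2 - z0 + z3) - z0*z2*(z0 + z1 - z3)*(z2 - z0 + z3)
      + (z2 - z0 + z3)*(z2 - z0 + z3)*z3*(z0 + z1 - z3)
      - z2*z3*(z0 + z1 - z3)*(z2 - z0 + z3)) * z1)
  = (z3^+3 - z1*z3^+2 - z1*z2*z3 - 3%:R*z0*z3^+2 - z0*z2*z3 + 2%:R*z0*z1*z3
      + z0*z1*z2 + 3%:R*z0^+2*z3 + z0^+2*z2 - z0^+2*z1 - z0^+3)
    * (z2 * z0 + z2 * z1 + z1 * z3) by ring.
by rewrite hPhi mulr0 mul0r.
Qed.

Section Frobenius.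
Variables (L : finFieldType) (q : nat).
Hypothesis q_gt1 : (1 < q)%N.
Hypothesis exprDq : forall x y : L, (x + y) ^+ q = x ^+ q + y ^+ q.
Hypothesis expr_q6 : forall x : L, x ^+ (q ^ 6) = x.

Definition frob (i : nat) (x : L) : L := x ^+ (q ^ i).

Lemma frob0 x : frob 0 x = x.
Proof. by rewrite /frob expn0 expr1. Qed.

Lemma frob1E x : frob 1 x = x ^+ q.
Proof. by rewrite /frob expn1. Qed.

Lemma frobS i x : frob i.+1 x = frob i x ^+ q.
Proof. by rewrite /frob expnSr exprM. Qed.

Lemma frob_comp i j x : frob j (frob i x) = frob (i + j) x.
Proof. by rewrite /frob -exprM expnD. Qed.

Lemma frobD i x y : frob i (x + y) = frob i x + frob i y.
Proof.
elim: i => [|i IH]; first by rewrite !frob0.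
by rewrite !frobS IH exprDq.
Qed.

Lemma frobB i x y : frob i (x - y) = frob i x - frob i y.
Proof. by apply: (addIr (frob i y)); rewrite -frobD !subrK. Qed.

Lemma frobM i x y : frob i (x * y) = frob i x * frob i y.
Proof. by rewrite /frob exprMn. Qed.

Lemma frobV i x : frob i x^-1 = (frob i x)^-1.
Proof. by rewrite /frob exprVn. Qed.

Lemma frob1r i : frob i 1 = 1.
Proof. by rewrite /frob expr1n. Qed.

Lemma frob_eq0 i x : (frob i x == 0) = (x == 0).
Proof. by rewrite /frob expf_eq0 expn_gt0 (ltnW q_gt1). Qed.

Lemma frob_inj i : injective (frob i).
Proof. by move=> x y e; apply/eqP; rewrite -subr_eq0 -(frob_eq0 i) frobB e subrr. Qed.

Lemma frob_mod6 i x : frob (6 + i) x = frob i x.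
Proof. by rewrite -frob_comp /frob expr_q6. Qed.

Lemma frob_fixed i {c : L} : c ^+ q = c -> frob i c = c.
Proof.
move=> hc; elim: i => [|i IH]; first exact: frob0.
by rewrite frobS IH.
Qed.

Lemma Fmap_frob (x : L) : Fmap q x = frob 2 x - frob 1 x + frob 0 x.
Proof. by rewrite /Fmap /frob expn0 expn1 expr1. Qed.

Lemma frob_Fmap i (x : L) : frob i (Fmap q x) = frob i.+2 x - frob i.+1 x + frob i x.
Proof. by rewrite Fmap_frob frobD frobB !frob_comp. Qed.

Lemma Phi_frob (z : L) :
  Phi q z = frob 2 z * frob 0 z + frob 2 z * frob 1 z + frob 1 z * frob 3 z.
Proof. by rewrite /Phi /frob expn0 expn1 expr1. Qed.

Lemma Wsp_frob4 {z : L} : z \in Wsp L q -> frob 4 z = frob 0 z + frob 1 z - frob 3 z.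
Proof.
by case/imsetP=> x _ ->; rewrite !frob_Fmap ?(frob_mod6 0) ?(frob_mod6 1) !frob0; ring.
Qed.

Lemma Wsp_frob5 {z : L} : z \in Wsp L q -> frob 5 z = frob 2 z - frob 0 z + frob 3 z.
Proof.
by case/imsetP=> x _ ->; rewrite !frob_Fmap ?(frob_mod6 0) ?(frob_mod6 1) !frob0; ring.
Qed.

Lemma inFqstar1 : inFqstar q (1 : L).
Proof. by rewrite /inFqstar expr1n eqxx oner_neq0. Qed.

Lemma inFqstarM (c d : L) : inFqstar q c -> inFqstar q d -> inFqstar q (c * d).
Proof.
case/andP=> /eqP hc nc /andP[/eqP hd nd].
by rewrite /inFqstar exprMn hc hd eqxx mulf_neq0.
Qed.

Lemma inFqstarV (c : L) : inFqstar q c -> inFqstar q c^-1.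
Proof. by case/andP=> /eqP hc nc; rewrite /inFqstar exprVn hc eqxx invr_eq0. Qed.

Lemma ptP (x y : L) : reflect (exists2 c, inFqstar q c & y = c * x) (y \in pt q x).
Proof. by apply: (iffP imsetP) => -[c hc ->]; exists c. Qed.

Lemma mem_pt (x : L) : x \in pt q x.
Proof. by apply/ptP; exists 1; rewrite ?mul1r ?inFqstar1. Qed.

Lemma pt_scale (c x : L) : inFqstar q c -> pt q (c * x) = pt q x.
Proof.
move=> hc; apply/setP=> y; apply/ptP/ptP=> -[d hd ->].
  by exists (d * c); rewrite ?mulrA ?inFqstarM.
exists (d * c^-1); first by rewrite inFqstarM ?inFqstarV.
by rewrite -mulrA (mulrA c^-1) mulVf ?mul1r //; case/andP: hc.
Qed.

Lemma pt_eq_scale {u v : L} : pt q u = pt q v -> exists2 c, inFqstar q c & v = c * u.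
Proof. by move=> e; apply/ptP; rewrite e mem_pt. Qed.

Lemma Fmap_scale (c x : L) : c ^+ q = c -> Fmap q (c * x) = c * Fmap q x.
Proof. by move=> hc; rewrite !Fmap_frob !frobM !frob0 !(frob_fixed _ hc); ring. Qed.

Lemma projV_pt (x : L) : projV q (pt q x) = pt q (Fmap q x).
Proof.
rewrite /projV; case: pickP => [y /ptP[c hc ->]|/(_ x)].
  by rewrite Fmap_scale ?pt_scale //; case/andP: hc => /eqP.
by rewrite mem_pt.
Qed.

Lemma pt_notin_Cset (z : L) : z != 0 -> frob 3 z != z -> pt q z \notin Cset L q.
Proof.
move=> nz n3; rewrite inE negb_and orbC; apply/orP; left.
apply/negP=> /existsP[w /and3P[/eqP hw nw /eqP e]].
case: (pt_eq_scale e) => c /andP[/eqP hc nc] ez.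
move: hw; rewrite ez -/(frob 3 _) frobM frob_fixed // => /(mulfI nc) e3.
by rewrite e3 eqxx in n3.
Qed.

Lemma norm_eq1E (b : L) : b != 0 ->
  (b ^+ (q ^ 2 - q + 1) == 1) = (frob 2 b * b == frob 1 b).
Proof.
move=> nb; have e : (q ^ 2 - q + 1 + q = q ^ 2 + 1)%N.
  have : (q <= q ^ 2)%N by rewrite expnS expn1 leq_pmulr // ltnW.
  lia.
by rewrite -(inj_eq (mulIf (expf_neq0 q nb))) mul1r -exprD e exprD expr1 -frob1E.
Qed.

Lemma norm_eq1_neq0 (b : L) : b ^+ (q ^ 2 - q + 1) = 1 -> b != 0.
Proof. by apply: contra_eqN => /eqP->; rewrite addn1 exprS mul0r eq_sym oner_eq0. Qed.

(* As frob 5 inverts s, this is the b with s(b) = z / s^3(z); for z = F(b - 1)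
   it recovers b (norm_root_Fmap below). *)
Definition norm_root (z : L) : L := frob 5 (z / frob 3 z).

Lemma frob_norm_root i z : frob i.+1 (norm_root z) = frob i z / frob i.+3 z.
Proof. by rewrite frob_comp frobM frobV frob_comp (frob_mod6 i) (frob_mod6 i.+3). Qed.

Lemma norm_root_scale (c z : L) : c ^+ q = c -> c != 0 ->
  norm_root (c * z) = norm_root z.
Proof.
by move=> hc nc; rewrite /norm_root (frobM 3 c) (frob_fixed 3 hc) -mulf_div divff ?mul1r.
Qed.

Section NormOne.
Variable b : L.
Hypotheses (b_neq0 : b != 0) (b_norm : frob 2 b * b = frob 1 b).

Lemma frob_norm i : frob i.+2 b = frob i.+1 b / frob i b.
Proof.
have := congr1 (frob i) b_norm; rewrite frobM !frob_comp !(addnC _ i) addn1 addn2 => <-.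
by rewrite mulfK // frob_eq0.
Qed.

Lemma frob1_norm_neq : b != 1 -> frob 1 b != b.
Proof.
move=> b_neq1; apply: contraNneq b_neq1 => e1.
have e2 : frob 2 b = b by rewrite -(frob_comp 1 1) !e1.
by move: b_norm; rewrite e2 e1 -{3}(mul1r b) => /(mulIf b_neq0)/eqP.
Qed.

Let frob1_neq0 : frob 1 b != 0. Proof. by rewrite frob_eq0. Qed.

Lemma Fmap_norm : Fmap q (b - 1) = (b - 1) * (b - frob 1 b) / b.
Proof. by rewrite Fmap_frob !frobB !frob1r (frob_norm 0) !frob0; field. Qed.

Lemma Fmap_norm_neq0 : b != 1 -> Fmap q (b - 1) != 0.
Proof.
move=> b_neq1; rewrite Fmap_norm !mulf_neq0 ?invr_eq0 ?subr_eq0 //.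
by rewrite eq_sym frob1_norm_neq.
Qed.

Lemma Phi_Fmap_norm : Phi q (Fmap q (b - 1)) = 0.
Proof.
rewrite Phi_frob !frob_Fmap !frobB !frob1r !frob0.
rewrite !(frob_norm 3) !(frob_norm 2) !(frob_norm 1) !(frob_norm 0) !frob0.
by field; rewrite ?frob1_neq0 ?b_neq0 ?oner_neq0.
Qed.

Lemma frob3_Fmap_norm : frob 3 (Fmap q (b - 1)) * frob 1 b = Fmap q (b - 1).
Proof.
rewrite frob_Fmap Fmap_frob !frobB !frob1r !frob0.
rewrite !(frob_norm 3) !(frob_norm 2) !(frob_norm 1) !(frob_norm 0) !frob0.
by field; rewrite ?frob1_neq0 ?b_neq0 ?oner_neq0.
Qed.

Lemma norm_root_Fmap : b != 1 -> norm_root (Fmap q (b - 1)) = b.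
Proof.
move=> b_neq1; apply: (frob_inj 1); rewrite frob_norm_root frob0.
by rewrite -{1}frob3_Fmap_norm mulrAC divff ?mul1r // frob_eq0 Fmap_norm_neq0.
Qed.

Lemma frob3_Fmap_norm_neq : b != 1 -> frob 3 (Fmap q (b - 1)) != Fmap q (b - 1).
Proof.
move=> b_neq1; apply: contraNneq (b_neq1) => e3.
have := norm_root_Fmap b_neq1.
by rewrite /norm_root e3 divff ?Fmap_norm_neq0 // frob1r => <-.
Qed.
End NormOne.

Section QuadricPoint.
Variable z : L.
Hypotheses (z_neq0 : z != 0) (z_in_W : z \in Wsp L q) (z_Phi : Phi q z = 0).

Let frobz_neq0 i : frob i z != 0. Proof. by rewrite frob_eq0. Qed.

Lemma norm_rootE : norm_root z = frob 5 z / frob 2 z.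
Proof. by rewrite -[LHS]frob0 -(frob_mod6 0) (frob_norm_root 5) (frob_mod6 2). Qed.

Lemma norm_root_neq0 : norm_root z != 0.
Proof. by rewrite -(frob_eq0 1) frob_norm_root mulf_neq0 ?invr_eq0. Qed.

Lemma norm_root_norm :
  frob 2 (norm_root z) * norm_root z = frob 1 (norm_root z).
Proof.
have := quadric_conj_prod (Wsp_frob4 z_in_W) (Wsp_frob5 z_in_W).
rewrite -Phi_frob !frob0 => /(_ z_Phi) conj_prod.
rewrite !frob_norm_root norm_rootE frob0; apply/eqP.
rewrite mulf_div eqr_div ?mulf_neq0 //; apply/eqP.
by rewrite mulrAC conj_prod; ring.
Qed.

Lemma norm_root_neq1 : frob 3 z != z -> norm_root z != 1.
Proof.
apply: contraNneq => b1; have := frob_norm_root 0 z.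
by rewrite b1 frob1r frob0 eq_sym => /esym/divr1_eq/eqP.
Qed.

Lemma Fmap_norm_root_ratio :
  (Fmap q (norm_root z - 1) / z) ^+ q = Fmap q (norm_root z - 1) / z.
Proof.
rewrite -frob1E frobM frobV frob_Fmap Fmap_frob !frobB !frob1r frob0.
rewrite !frob_norm_root norm_rootE frob0; apply/eqP; rewrite eqr_div //.
have := quadric_conj_ratio (Wsp_frob4 z_in_W) (Wsp_frob5 z_in_W).
rewrite -Phi_frob !frob0 => /(_ z_Phi (frobz_neq0 2) (frobz_neq0 3)).
by move=> /(_ (frobz_neq0 4) (frobz_neq0 5)) ->.
Qed.

Lemma pt_Fmap_norm_root : frob 3 z != z -> pt q (Fmap q (norm_root z - 1)) = pt q z.
Proof.
move=> z_notin_Fq3; set y := Fmap q (norm_root z - 1).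
have y_neq0 : y != 0.
  by apply: Fmap_norm_neq0; [exact: norm_root_neq0 | exact: norm_root_norm
    | exact: norm_root_neq1].
have -> : y = (y / z) * z by rewrite divfK.
by rewrite pt_scale // /inFqstar Fmap_norm_root_ratio eqxx mulf_neq0 ?invr_eq0.
Qed.
End QuadricPoint.

Lemma mem_Yset (P : {set L}) : P \in Yset L q ->
  exists b, [/\ b != 0, frob 2 b * b = frob 1 b, b != 1 & P = pt q (b - 1)].
Proof.
case/imsetP=> b; rewrite inE => /andP[hb b_neq1] ->.
have b_neq0 := norm_eq1_neq0 b (eqP hb).
by exists b; split=> //; apply/eqP; rewrite -norm_eq1E.
Qed.

Lemma pt_Fmap_norm_in_EsetDC (b : L) : b != 0 -> frob 2 b * b = frob 1 b -> b != 1 ->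
  pt q (Fmap q (b - 1)) \in Eset L q :\: Cset L q.
Proof.
move=> b_neq0 b_norm b_neq1; have z_neq0 := Fmap_norm_neq0 _ b_neq0 b_norm b_neq1.
rewrite inE pt_notin_Cset ?frob3_Fmap_norm_neq //=.
apply/imsetP; exists (Fmap q (b - 1)) => //.
by rewrite inE z_neq0 Phi_Fmap_norm // eqxx !andbT imset_f.
Qed.

Lemma Yset_Fmap_in_EsetDC (P : {set L}) (y : L) : P \in Yset L q -> y \in P ->
  pt q (Fmap q y) \in Eset L q :\: Cset L q.
Proof.
case/mem_Yset=> b [b_neq0 b_norm b_neq1 ->] /ptP[c hc ->].
have /andP[/eqP c_fixed _] := hc.
by rewrite Fmap_scale // pt_scale // pt_Fmap_norm_in_EsetDC.
Qed.

Lemma projV_Yset_inj : {in Yset L q &, injective (projV q)}.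
Proof.
move=> P P' /mem_Yset[b [b_neq0 b_norm b_neq1 ->]].
case/mem_Yset=> b' [b'_neq0 b'_norm b'_neq1 ->]; rewrite !projV_pt.
case/pt_eq_scale=> c /andP[/eqP c_fixed c_neq0] e.
rewrite -(norm_root_Fmap _ b_neq0 b_norm b_neq1).
by rewrite -(norm_root_Fmap _ b'_neq0 b'_norm b'_neq1) e norm_root_scale.
Qed.

Lemma projV_Yset : projV q @: Yset L q = Eset L q :\: Cset L q.
Proof.
apply/setP=> Q; apply/imsetP/idP=> [[P /mem_Yset[b [? ? ? ->]] ->]|].
  by rewrite projV_pt pt_Fmap_norm_in_EsetDC.
rewrite inE => /andP[Q_notin_C /imsetP[z]]; rewrite inE => /and3P[z_in_W z_neq0].
move=> /eqP z_Phi eQ; have z_notin_Fq3 : frob 3 z != z.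
  apply: contraNneq Q_notin_C => e3; rewrite inE eQ (imset_f _) /=; last first.
    by rewrite inE z_in_W z_neq0 z_Phi eqxx.
  by apply/existsP; exists z; rewrite -/(frob 3 z) e3 z_neq0 !eqxx.
exists (pt q (norm_root z - 1)); last by rewrite projV_pt pt_Fmap_norm_root.
apply/imsetP; exists (norm_root z) => //.
by rewrite inE norm_eq1E ?norm_root_neq0 ?norm_root_norm ?norm_root_neq1 ?eqxx.
Qed.

End Frobenius.

Theorem mainTheorem15 (L : finFieldType) (q : nat)
  (hq : exists p k : nat, [/\ prime p, (0 < k)%N & q = (p ^ k)%N])
  (hL : #|L| = (q ^ 6)%N) :
  (forall P, P \in Yset L q -> forall y, y \in P ->
      pt q (Fmap q y) \in Eset L q :\: Cset L q)
  /\ ({in Yset L q &, injective (projV q)}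
      /\ projV q @: Yset L q = Eset L q :\: Cset L q).
Proof.
have [p [k [p_prime k_gt0 q_eq]]] := hq.
have q_gt1 : (1 < q)%N by rewrite q_eq -[1%N](expn0 p) ltn_exp2l ?prime_gt1.
have p_char : p \in [pchar L].
  by apply: (card_finPcharP (n := k * 6)); rewrite // hL q_eq expnM.
have exprDq (x y : L) : (x + y) ^+ q = x ^+ q + y ^+ q.
  by apply: exprDn_pchar; rewrite (eq_pnat _ (pcharf_eq p_char)) q_eq pnatX pnat_id.
have expr_q6 (x : L) : x ^+ (q ^ 6) = x by rewrite -hL expf_card.
split; first by move=> P hP y; apply: Yset_Fmap_in_EsetDC.
by split; [apply: projV_Yset_inj | apply: projV_Yset].
Qed.
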